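(* Let $(\mathbf W^B,\mathbf W^E)=(\{W^{B,n}\},\{W^{E,n}\})$ be a general sequence of wire-tap channels, $W^{B,n}$ from $\mathcal X^n$ to $\mathcal Y^n$ and $W^{E,n}$ from $\mathcal X^n$ to $\mathcal Z^n$. Then $$C_d(\mathbf W^B,\mathbf W^E)\le\sup_{\mathbf p,\mathbf Q}\big\{\underline I(1|\mathbf p,\mathbf W^B\mathbf Q)-\overline I(0|\mathbf p,\mathbf W^E\mathbf Q)\big\},$$ $$C_I(\mathbf W^B,\mathbf W^E)\le\sup_{\mathbf p,\mathbf Q}\big\{\underline I(1|\mathbf p,\mathbf W^B\mathbf Q)-\overline I(0|\mathbf p,\mathbf W^E\mathbf Q)\big\},$$ where the suprema range over all sequences of sets $\tilde{\mathcal X}^n$, all sequences $\mathbf Q=\{Q^n\}$ of channels from $\tilde{\mathcal X}^n$ to $\mathcal X^n$, and all sequences $\mathbf p=\{p^n\}$ of distributions on $\tilde{\mathcal X}^n$.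
   Context: Channels are maps $x\mapsto W_x$ into probability distributions on a finite or countable output set; $W_p(y)=\sum_xp(x)W_x(y)$. For $\mathbf W=\{W^n\}$ and $\mathbf Q=\{Q^n\}$, $\mathbf W\mathbf Q=\{W^nQ^n\}$ with $(W^nQ^n)_{\tilde x}(y):=\sum_{x\in\mathcal X^n}W^n_x(y)Q^n_{\tilde x}(x)$. A wire-tap code $\Phi=(M,\{Q_i\},\{\mathcal D_i\})$ for $(W^B,W^E)$: input distributions $Q_1,\dots,Q_M$, pairwise disjoint decoding sets $\mathcal D_i$ for the main receiver; $|\Phi|=M$, $\epsilon_B(\Phi)=\frac1M\sum_iW^B_{Q_i}(\mathcal D_i^c)$, $I_E(\Phi)=\sum_i\frac1MD(W^E_{Q_i}\|W^E_\Phi)$ with $W^E_\Phi=\frac1M\sum_iW^E_{Q_i}$, $d_E(\Phi)=\frac1{M(M-1)}\sum_{i\ne j}\sum_z|W^E_{Q_i}(z)-W^E_{Q_j}(z)|$. $C_d(\mathbf W^B,\mathbf W^E):=\sup\{\liminf_n\frac1n\log|\Phi_n|\}$ over sequences of wire-tap codes with $\epsilon_B(\Phi_n)\to0$, $d_E(\Phi_n)\to0$; $C_I$ the same with $I_E(\Phi_n)/n\to0$ instead of $d_E(\Phi_n)\to0$. $\overline I(\epsilon|\mathbf p,\mathbf W):=\inf\{a:\limsup_n\mathrm{E}_{p^n}W^n_x\{y:\frac1n\log\frac{W^n_x(y)}{W^n_{p^n}(y)}>a\}\le\epsilon\}$, $\underline I(\epsilon|\mathbf p,\mathbf W):=\inf\{a:\liminf_n\mathrm{E}_{p^n}W^n_x\{y:\frac1n\log\frac{W^n_x(y)}{W^n_{p^n}(y)}>a\}\le\epsilon\}$,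 with ''$\le\epsilon$'' replaced by ''$<1$'' when $\epsilon=1$. *)

From HB Require Import structures.
From mathcomp Require Import all_boot all_order all_algebra.
From mathcomp Require Import all_classical all_reals all_analysis.
Set Implicit Arguments. Unset Strict Implicit. Unset Printing Implicit Defensive.
Import Order.TTheory GRing.Theory Num.Theory numFieldNormedType.Exports.
Local Open Scope classical_set_scope.
Local Open Scope ring_scope.

Section Defs.
Variable R : realType.

Definition is_dist (T : countType) (p : T -> R) : Prop :=
  (forall x, 0 <= p x) /\ (\esum_(x in [set: T]) (p x)%:E = 1)%E.

Definition is_channel (X Y : countType) (W : X -> Y -> R) : Prop :=
  forall x, is_dist (W x).

Definition out_dist (X Y : countType) (W : X -> Y -> R) (p : X -> R) (y : Y) : R :=
  fine (\esum_(x in [set: X]) (p x * W x y)%:E)%E.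

Definition chcomp (Xt X Y : countType) (W : X -> Y -> R) (Q : Xt -> X -> R)
  : Xt -> Y -> R :=
  fun xt y => fine (\esum_(x in [set: X]) (W x y * Q xt x)%:E)%E.

Definition divergence (Z : countType) (P Q : Z -> R) : \bar R :=
  if `[< exists z, 0 < P z /\ Q z = 0 >] then +oo%E else
  (\esum_(z in [set: Z]) (Num.max (P z * ln (P z / Q z)) 0)%:E
   - \esum_(z in [set: Z]) (Num.max (- (P z * ln (P z / Q z))) 0)%:E)%E.

Record wtcode (X Y : countType) := WTCode {
  wt_M : nat;
  wt_M_gt0 : (0 < wt_M)%N;
  wt_Q : 'I_wt_M -> X -> R;
  wt_Q_dist : forall i, is_dist (wt_Q i);
  wt_D : 'I_wt_M -> set Y;
  wt_D_disj : forall i j, i != j -> wt_D i `&` wt_D j = set0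
}.
Arguments wt_M {X Y} w : rename.
Arguments wt_Q {X Y} w _ : rename.
Arguments wt_D {X Y} w _ : rename.

Variables (X Y Z : countType).

Definition eps_B (WB : X -> Y -> R) (c : wtcode X Y) : R :=
  (wt_M c)%:R^-1 * \sum_(i < wt_M c)
     fine (\esum_(y in ~` (wt_D c i)) (out_dist WB (wt_Q c i) y)%:E)%E.

Definition code_out (WE : X -> Z -> R) (c : wtcode X Y) (z : Z) : R :=
  (wt_M c)%:R^-1 * \sum_(i < wt_M c) out_dist WE (wt_Q c i) z.

Definition I_E (WE : X -> Z -> R) (c : wtcode X Y) : \bar R :=
  (\sum_(i < wt_M c) ((wt_M c)%:R^-1)%:E *
     divergence (out_dist WE (wt_Q c i)) (code_out WE c))%E.

Definition d_E (WE : X -> Z -> R) (c : wtcode X Y) : R :=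
  ((wt_M c * (wt_M c).-1)%:R)^-1 *
  \sum_(i < wt_M c) \sum_(j < wt_M c | i != j)
     fine (\esum_(z in [set: Z])
        (`|out_dist WE (wt_Q c i) z - out_dist WE (wt_Q c j) z|)%:E)%E.

End Defs.

Section Cap.
Variable R : realType.
Variables (X Y Z : nat -> countType).

Definition code_rate (c : forall n, wtcode R (X n) (Y n)) : \bar R :=
  limn_einf (fun n => ((n%:R)^-1 * ln ((wt_M (c n))%:R) : R)%:E).

Definition C_d (WB : forall n, X n -> Y n -> R) (WE : forall n, X n -> Z n -> R)
  : \bar R :=
  ereal_sup [set l | exists c : forall n, wtcode R (X n) (Y n),
     (fun n => eps_B (WB n) (c n)) @ \oo --> (0:R) /\
     (fun n => d_E (WE n) (c n)) @ \oo --> (0:R) /\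
     l = code_rate c].

Definition C_I (WB : forall n, X n -> Y n -> R) (WE : forall n, X n -> Z n -> R)
  : \bar R :=
  ereal_sup [set l | exists c : forall n, wtcode R (X n) (Y n),
     (fun n => eps_B (WB n) (c n)) @ \oo --> (0:R) /\
     (fun n => (I_E (WE n) (c n) * ((n%:R)^-1)%:E)%E) @ \oo --> 0%E /\
     l = code_rate c].
End Cap.

Section Spectrum.
Variable R : realType.
Variables (X Y : nat -> countType).

Definition spec_prob (p : forall n, X n -> R) (W : forall n, X n -> Y n -> R)
  (a : R) (n : nat) : \bar R :=
  (\esum_(x in [set: X n]) (p n x)%:E *
     \esum_(y in [set: Y n])
       (if a < (n%:R)^-1 * ln (W n x y / out_dist (W n) (p n) y)
        then W n x y else 0)%:E)%E.

Definition I_over (eps : R) (p : forall n, X n -> R) (W : forall n, X n -> Y n -> R)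
  : \bar R :=
  ereal_inf [set a%:E | a in [set a : R |
     if eps == 1 then (limn_esup (spec_prob p W a) < 1%:E)%E
     else (limn_esup (spec_prob p W a) <= eps%:E)%E]].

Definition I_under (eps : R) (p : forall n, X n -> R) (W : forall n, X n -> Y n -> R)
  : \bar R :=
  ereal_inf [set a%:E | a in [set a : R |
     if eps == 1 then (limn_einf (spec_prob p W a) < 1%:E)%E
     else (limn_einf (spec_prob p W a) <= eps%:E)%E]].
End Spectrum.

Definition secrecy_bound (R : realType) (X Y Z : nat -> countType)
  (WB : forall n, X n -> Y n -> R) (WE : forall n, X n -> Z n -> R) : \bar R :=
  ereal_sup [set v | exists (Xt : nat -> countType)
      (Q : forall n, Xt n -> X n -> R) (p : forall n, Xt n -> R),
      (forall n, is_channel (Q n)) /\ (forall n, is_dist (p n)) /\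
      v = (I_under 1 p (fun n => chcomp (WB n) (Q n))
           - I_over 0 p (fun n => chcomp (WE n) (Q n)))%E].

From HB Require Import structures.
From mathcomp Require Import all_boot all_order all_algebra.
From mathcomp Require Import all_classical all_reals all_analysis.
From mathcomp Require Import ring lra zify.
Set Implicit Arguments. Unset Strict Implicit. Unset Printing Implicit Defensive.
Import Order.TTheory GRing.Theory Num.Theory numFieldNormedType.Exports.
Local Open Scope classical_set_scope.
Local Open Scope ring_scope.

(* Take the message set of a good code as the auxiliary input alphabet, its
   encoder as [Q^n] and the uniform distribution as [p^n].  Splitting each
   [W^B_(Q_i)] over the set where the information density exceeds [n a], the
   complement of the decoding set [D_i], and the rest of [D_i] (where
   [W^B_(Q_i) <= e^(n a) W^B_p]) gives the Verdu-Han bound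
   [E_p W^B {i > n a} >= 1 - eps_B - e^(n a) / M]; hence every [a] below the
   rate has spectrum tending to 1, and the rate is at most
   [I_under(1 | p, W^B Q)].  On the eavesdropper side, for [a > 0] the
   spectrum [E_p W^E {i > n a}] is at most [2 d_E] once [e^(n a) >= 2], and
   at most [(I_E + 1) / (n a)] because [D(W^E_(Q_i) || W^E_p)] is at least
   [n a W^E_(Q_i) {i > n a} - 1]; so it vanishes and [I_over(0 | p, W^E Q)]
   is at most 0. *)

Section NonnegSums.
Variable R : realType.
Local Open Scope ereal_scope.

Lemma esumZl (T : choiceType) (S : set T) (r : R) (a : T -> \bar R) :
  (0 <= r)%R -> (forall x, 0 <= a x) ->
  \esum_(i in S) (r%:E * a i) = r%:E * \esum_(i in S) a i.
Proof.
move=> r0 a0; rewrite /esum -ereal_supZl//; last first.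
  by apply/set0P; exists 0, set0; [exact: fsets_set0 | rewrite fsbig_set0].
congr ereal_sup; apply/seteqP; split=> x.
- by move=> [A fA <-]; exists (\sum_(i \in A) a i); [exists A | rewrite ge0_mule_fsumr].
- by move=> [_ [A fA <-] <-]; exists A => //; rewrite ge0_mule_fsumr.
Qed.

Lemma esum_swap (T1 T2 : choiceType) (a : T1 -> T2 -> \bar R) :
  (forall i j, 0 <= a i j) ->
  \esum_(i in [set: T1]) \esum_(j in [set: T2]) a i j =
  \esum_(j in [set: T2]) \esum_(i in [set: T1]) a i j.
Proof.
move=> a0; rewrite !(@esum_esum _ _ _ _ (fun=> setT))//.
rewrite (reindex_esum ([set: T2] `*`` (fun=> [set: T1])) _ (fun x => (x.2, x.1)))//.
split=> //= [[i1 i2] [j1 j2] _ _ [-> ->] // | [i1 i2] _].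
by exists (i2, i1).
Qed.

Lemma esum_setT_fin (T : finType) (F : T -> \bar R) :
  (forall i, 0 <= F i) -> \esum_(i in [set: T]) F i = \sum_(i : T) F i.
Proof.
move=> F0; rewrite esum_fset //; last exact: finite_finset.
rewrite -big_enum /= [RHS]fsbig_seq ?enum_uniq //; apply: eq_fsbigl.
by apply/seteqP; split => x //= _; rewrite mem_enum.
Qed.

Lemma le_esum_setT (T : choiceType) (S : set T) (f : T -> \bar R) :
  (forall y, 0 <= f y) -> \esum_(y in S) f y <= \esum_(y in [set: T]) f y.
Proof. by move=> f0; rewrite esum_mkcond; apply: le_esum => y _; case: ifP. Qed.

Lemma le_term_esum (T : choiceType) (f : T -> \bar R) x :
  (forall y, 0 <= f y) -> f x <= \esum_(y in [set: T]) f y.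
Proof. by move=> f0; rewrite -esum_set1 //; exact: le_esum_setT. Qed.

Lemma esum_EFin_mkcond (T : choiceType) (S : set T) (f : T -> R) :
  \esum_(y in S) (f y)%:E = \esum_(y in [set: T]) (if y \in S then f y else 0)%:E.
Proof. by rewrite esum_mkcond; apply: eq_esum => y _; case: ifP. Qed.

Lemma esum_dominatedE (T : choiceType) (S : set T) (f g : T -> R) (C : R) :
  (forall y, 0 <= f y <= g y)%R -> \esum_(y in [set: T]) (g y)%:E = C%:E ->
  \esum_(y in S) (f y)%:E = (fine (\esum_(y in S) (f y)%:E))%:E /\
  (0 <= fine (\esum_(y in S) (f y)%:E) <= C)%R.
Proof.
move=> fg gC.
have f0 y : 0 <= (f y)%:E by rewrite lee_fin; case/andP: (fg y).
have e0 : 0 <= \esum_(y in S) (f y)%:E by exact: esum_ge0.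
have eC : \esum_(y in S) (f y)%:E <= C%:E.
  rewrite -gC (le_trans (le_esum_setT _ f0)) //.
  by apply: le_esum => y _; rewrite lee_fin; case/andP: (fg y).
have /fineK E : \esum_(y in S) (f y)%:E \is a fin_num.
  by rewrite ge0_fin_numE // (le_lt_trans eC) ?ltry.
by split => //; rewrite -!lee_fin E e0 eC.
Qed.

End NonnegSums.

Section Distributions.
Variable R : realType.
Implicit Types (T X Y : countType).

Lemma dist_ge0 T (q : T -> R) : is_dist q -> forall x, 0 <= q x.
Proof. by case. Qed.

Lemma dist_le1 T (q : T -> R) : is_dist q -> forall x, q x <= 1.
Proof.
move=> [q0 q1] x; rewrite -lee_fin -q1.
by apply: le_term_esum => y; rewrite lee_fin.
Qed.

Lemma out_distE X Y (W : X -> Y -> R) (q : X -> R) y :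
  is_channel W -> is_dist q ->
  (out_dist W q y)%:E = (\esum_(x in [set: X]) (q x * W x y)%:E)%E.
Proof.
move=> hW hq; apply/esym/(esum_dominatedE _ (g := q) _ hq.2).1 => x.
by rewrite mulr_ge0 ?ler_piMr ?dist_ge0 ?(dist_le1 (hW x)).
Qed.

Lemma out_dist_is_dist X Y (W : X -> Y -> R) (q : X -> R) :
  is_channel W -> is_dist q -> is_dist (out_dist W q).
Proof.
move=> hW hq; have Wq0 x y : (0 <= (q x * W x y)%:E)%E.
  by rewrite lee_fin mulr_ge0 ?dist_ge0 ?(dist_ge0 (hW x)).
split=> [y|]; first by rewrite -lee_fin out_distE //; exact: esum_ge0.
rewrite (eq_esum (fun y _ => out_distE y hW hq)) -esum_swap // -hq.2.
apply: eq_esum => x _; under eq_esum do rewrite EFinM.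
by rewrite esumZl ?dist_ge0 ?(hW x).2 ?mule1 // => y; rewrite lee_fin (dist_ge0 (hW x)).
Qed.

Lemma chcompE T X Y (W : X -> Y -> R) (Q : T -> X -> R) t y :
  chcomp W Q t y = out_dist W (Q t) y.
Proof. by rewrite /chcomp /out_dist; congr fine; apply: eq_esum => x _; rewrite mulrC. Qed.

Lemma chcomp_is_channel T X Y (W : X -> Y -> R) (Q : T -> X -> R) :
  is_channel W -> is_channel Q -> is_channel (chcomp W Q).
Proof.
move=> hW hQ t; have -> : chcomp W Q t = out_dist W (Q t).
  by apply/funext => y; rewrite chcompE.
exact: out_dist_is_dist.
Qed.

End Distributions.

Definition unif (R : realType) (M : nat) : 'I_M -> R := fun=> M%:R^-1.
Arguments unif : clear implicits.

Lemma unif_is_dist (R : realType) (M : nat) : (0 < M)%N -> is_dist (unif R M).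
Proof.
move=> M0; split=> [i|]; first by rewrite /unif invr_ge0.
rewrite esum_setT_fin => [|i]; last by rewrite lee_fin /unif invr_ge0.
by rewrite sumEFin sumr_const card_ord /unif -(mulr_natr M%:R^-1) mulVf ?pnatr_eq0 -?lt0n.
Qed.

Section LogRatio.
Variable R : realType.
Implicit Types s a u v : R.

Lemma le_expR_mul_of_ln_ratio s a u v : 0 < s -> 0 < u -> 0 < v ->
  ~~ (a < s * ln (u / v)) -> u <= expR (a / s) * v.
Proof.
move=> s0 u0 v0; rewrite -leNgt -ler_pdivrMr // => h.
by rewrite -(lnK (_ : 0 < u / v)) ?posrE ?divr_gt0 // ler_expR ler_pdivlMr // mulrC.
Qed.

(* [ln] vanishes on nonpositive reals and [u / 0 = 0], so a positive
   log-ratio forces both [u] and [v] to be positive. *)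
Lemma ln_ratio_gt s a u v : 0 < s -> 0 < a -> 0 <= u -> 0 <= v ->
  a < s * ln (u / v) -> [/\ 0 < u, 0 < v & a / s < ln (u / v)].
Proof.
move=> s0 a0 u0 v0 h.
have uv0 : 0 < u / v.
  rewrite lt_neqAle divr_ge0 // andbT; apply/negP => /eqP uv0.
  by move: h; rewrite -uv0 ln0 // mulr0 ltNge (ltW a0).
split; last by rewrite ltr_pdivrMr // mulrC.
- by rewrite lt_neqAle u0 andbT; apply: contraTneq uv0 => <-; rewrite mul0r ltxx.
- by rewrite lt_neqAle v0 andbT; apply: contraTneq uv0 => <-; rewrite invr0 mulr0 ltxx.
Qed.

Lemma mul_ln_ratio_le u v : 0 < u -> 0 < v -> u * ln (v / u) <= v - u.
Proof.
move=> u0 v0; have := expR_ge1Dx (ln (v / u)).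
rewrite lnK ?posrE ?divr_gt0 // -(ler_pM2l u0) mulrDr mulr1 mulrCA divff ?gt_eqF //.
by rewrite mulr1; lra.
Qed.

End LogRatio.

Section Divergence.
Variables (R : realType) (Z : countType) (P Q : Z -> R).
Hypotheses (hP : is_dist P) (hQ : is_dist Q).

Lemma divergence_ge_tail s a : 0 < s -> 0 < a ->
  ((a / s * fine (\esum_(z in [set: Z])
      (if a < s * ln (P z / Q z) then P z else 0)%:E) - 1)%:E
   <= divergence P Q)%E.
Proof.
move=> s0 a0; rewrite /divergence; case: ifPn => [_|/asboolPn acPQ]; first by rewrite leey.
set tail := fun z => if a < s * ln (P z / Q z) then P z else 0.
have tail_dom z : 0 <= tail z <= P z.
  by rewrite /tail; case: ifP; rewrite ?lexx ?dist_ge0 // => _; rewrite (dist_ge0 hP).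
rewrite EFinB; apply: leeB.
- rewrite EFinM -(esum_dominatedE _ tail_dom hP.2).1 -esumZl; first last.
  + by move=> z; rewrite lee_fin; case/andP: (tail_dom z).
  + by rewrite ltW ?divr_gt0.
  apply: le_esum => z _; rewrite -EFinM lee_fin /tail le_max; apply/orP.
  case: ifPn => [h|_]; last by right; rewrite mulr0.
  have [Pz0 _ lt_ln] := ln_ratio_gt s0 a0 (dist_ge0 hP z) (dist_ge0 hQ z) h.
  by left; rewrite [_ * P z]mulrC ler_pM2l ?ltW.
- (* [P ln (Q / P) <= Q - P] bounds the negative part by [\sum_z Q z = 1]. *)
  rewrite -hQ.2; apply: le_esum => z _; rewrite lee_fin ge_max (dist_ge0 hQ) andbT.
  have [->|Pz0] := eqVneq (P z) 0; first by rewrite mul0r oppr0 dist_ge0.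
  have Pz_gt0 : 0 < P z by rewrite lt0r Pz0 dist_ge0.
  have Qz_gt0 : 0 < Q z.
    rewrite lt0r dist_ge0 // andbT; apply/eqP => Qz0.
    by apply: acPQ; exists z.
  rewrite -mulrN -lnV ?posrE ?divr_gt0 // invf_div.
  by rewrite (le_trans (mul_ln_ratio_le _ _)) // lerBlDr lerDl dist_ge0.
Qed.

End Divergence.

(* [spec_prob p W a n] unfolds to [spectrum (p n) (W n) n%:R^-1 a]. *)
Definition spectrum (R : realType) (T V : countType) (p : T -> R) (W : T -> V -> R)
  (s a : R) : \bar R :=
  (\esum_(t in [set: T]) (p t)%:E * \esum_(y in [set: V])
     (if a < s * ln (W t y / out_dist W p y) then W t y else 0)%:E)%E.

Section CodeSpectrum.
Variables (R : realType) (X Y V : countType) (c : wtcode R X Y) (W : X -> V -> R).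
Hypothesis hW : is_channel W.

Local Notation M := (wt_M c).
Local Notation WQ := (chcomp W (wt_Q (w:=c))).
Local Notation Wp := (out_dist WQ (unif R M)).

Let M_gt0 : 0 < M%:R :> R.
Proof. by rewrite ltr0n wt_M_gt0. Qed.

Lemma code_channel_is_channel : is_channel WQ.
Proof. exact: chcomp_is_channel hW (@wt_Q_dist _ _ _ c). Qed.
Let WQ_channel := code_channel_is_channel.

Lemma code_mix_is_dist : is_dist Wp.
Proof. exact: out_dist_is_dist WQ_channel (unif_is_dist R (wt_M_gt0 c)). Qed.
Let Wp_dist := code_mix_is_dist.

Lemma code_mixE y : Wp y = M%:R^-1 * \sum_(m < M) WQ m y.
Proof.
apply: EFin_inj; rewrite out_distE //; last exact: unif_is_dist (wt_M_gt0 c).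
rewrite esum_setT_fin; first by rewrite sumEFin mulr_sumr.
by move=> m; rewrite lee_fin mulr_ge0 ?invr_ge0 ?(dist_ge0 (WQ_channel m)).
Qed.

Lemma code_outE : code_out W c = Wp.
Proof.
apply/funext => z; rewrite code_mixE /code_out.
by congr (_ * _); apply: eq_bigr => m _; rewrite chcompE.
Qed.

Lemma code_mix_gt0 m y : 0 < WQ m y -> 0 < Wp y.
Proof.
move=> WQ_gt0; rewrite code_mixE mulr_gt0 ?invr_gt0 // (lt_le_trans WQ_gt0) //.
rewrite (bigD1 m) //= lerDl sumr_ge0 // => j _.
exact: (dist_ge0 (WQ_channel j)).
Qed.

Definition spec_msg s a m := fine (\esum_(y in [set: V])
  (if a < s * ln (WQ m y / Wp y) then WQ m y else 0)%:E)%E.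

Let spec_msg_dom s a m y :
  0 <= (if a < s * ln (WQ m y / Wp y) then WQ m y else 0) <= WQ m y.
Proof. by case: ifP => _; rewrite ?lexx (dist_ge0 (WQ_channel m)). Qed.

Lemma spec_msgE s a m : (\esum_(y in [set: V])
  (if a < s * ln (WQ m y / Wp y) then WQ m y else 0)%:E)%E = (spec_msg s a m)%:E.
Proof. exact: (esum_dominatedE _ (spec_msg_dom s a m) (WQ_channel m).2).1. Qed.

Lemma spec_msg_ge0_le1 s a m : 0 <= spec_msg s a m <= 1.
Proof. exact: (esum_dominatedE _ (spec_msg_dom s a m) (WQ_channel m).2).2. Qed.

Definition code_spectrum s a := M%:R^-1 * \sum_(m < M) spec_msg s a m.

Lemma spectrum_codeE s a : spectrum (unif R M) WQ s a = (code_spectrum s a)%:E.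
Proof.
rewrite /spectrum (eq_esum (fun m _ => congr1 _ (spec_msgE s a m))) esum_setT_fin.
  by under eq_bigr do rewrite -EFinM; rewrite sumEFin -mulr_sumr.
move=> m; rewrite -EFinM lee_fin mulr_ge0 ?invr_ge0 //.
by case/andP: (spec_msg_ge0_le1 s a m).
Qed.

Lemma code_spectrum_ge0_le1 s a : 0 <= code_spectrum s a <= 1.
Proof.
rewrite mulr_ge0 ?invr_ge0 ?sumr_ge0 //=; last by move=> m _; case/andP: (spec_msg_ge0_le1 s a m).
rewrite ler_pdivrMl // mulr1 -[X in _ <= X%:R]card_ord -sumr_const.
by apply: ler_sum => m _; case/andP: (spec_msg_ge0_le1 s a m).
Qed.

Definition code_dist m j := fine (\esum_(y in [set: V])
  (`|out_dist W (wt_Q (w:=c) m) y - out_dist W (wt_Q (w:=c) j) y|)%:E)%E.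

Lemma code_distE m j : (\esum_(y in [set: V])
  (`|out_dist W (wt_Q (w:=c) m) y - out_dist W (wt_Q (w:=c) j) y|)%:E)%E
  = (code_dist m j)%:E /\ 0 <= code_dist m j.
Proof.
have dist_m := out_dist_is_dist hW (wt_Q_dist m).
have dist_j := out_dist_is_dist hW (wt_Q_dist j).
have sum2 : (\esum_(y in [set: V])
    (out_dist W (wt_Q (w:=c) m) y + out_dist W (wt_Q (w:=c) j) y)%:E = 2%:E)%E.
  under eq_esum do rewrite EFinD.
  rewrite esumD ?dist_m.2 ?dist_j.2 // => y _; rewrite lee_fin dist_ge0 //.
have dom y : 0 <= `|out_dist W (wt_Q (w:=c) m) y - out_dist W (wt_Q (w:=c) j) y|
    <= out_dist W (wt_Q (w:=c) m) y + out_dist W (wt_Q (w:=c) j) y.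
  by rewrite normr_ge0 (le_trans (ler_normB _ _)) // !ger0_norm ?dist_ge0.
by have [E /andP[]] := esum_dominatedE [set: V] dom sum2.
Qed.

Lemma code_dist_diag m : code_dist m m = 0.
Proof. by rewrite /code_dist esum1 // => y _; rewrite subrr normr0. Qed.

Lemma spec_msg_le_code_dist s a m : 0 < s -> 2 <= expR (a / s) ->
  spec_msg s a m <= 2 * (M%:R^-1 * \sum_(j < M) code_dist m j).
Proof.
move=> s0 K2; have a0 : 0 < a.
  suff : 0 < a / s by rewrite pmulr_lgt0 ?invr_gt0.
  by rewrite ltNge -expR_le1; apply: contraTN K2 => e1; rewrite -ltNge (le_lt_trans e1) ?ltr1n.
rewrite -lee_fin -spec_msgE mulrA.
rewrite (_ : (_ * _)%:E = \esum_(y in [set: V]) ((2 * M%:R^-1)%:E * \sum_(j < M)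
    (`|out_dist W (wt_Q (w:=c) m) y - out_dist W (wt_Q (w:=c) j) y|)%:E))%E;
  last first.
  rewrite esumZl ?mulr_ge0 ?invr_ge0 //; last by move=> y; rewrite sume_ge0.
  rewrite esum_sum // EFinM -sumEFin; congr (_ * _)%E.
  by apply: eq_bigr => j _; rewrite (code_distE m j).1.
apply: le_esum => y _; rewrite sumEFin -EFinM lee_fin.
case: ifPn => [h|_]; last by rewrite mulr_ge0 ?invr_ge0 ?sumr_ge0.
have [WQ_gt0 Wp_gt0 lt_ln] := ln_ratio_gt s0 a0 (dist_ge0 (WQ_channel m) y)
  (dist_ge0 Wp_dist y) h.
(* On the high-density set [W_m > 2 W_p], so [W_m <= 2 (W_m - W_p)], and
   [W_m - W_p] is the average of the [W_m - W_j]. *)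
have Wp2 : 2 * Wp y < WQ m y.
  rewrite -ltr_pdivlMr // (le_lt_trans K2) //.
  by rewrite -[X in _ < X]lnK ?posrE ?divr_gt0 // ltr_expR.
have gap : WQ m y - Wp y <= M%:R^-1 * \sum_(j < M)
    `|out_dist W (wt_Q (w:=c) m) y - out_dist W (wt_Q (w:=c) j) y|.
  rewrite code_mixE -[X in X - _](mulKf (lt0r_neq0 M_gt0)).
  rewrite -mulrBr ler_pM2l ?invr_gt0 // mulr_natl.
  have -> : WQ m y *+ M = \sum_(j < M) WQ m y by rewrite sumr_const card_ord.
  by rewrite -sumrB; apply: ler_sum => j _; rewrite -!chcompE ler_norm.
by rewrite -mulrA; lra.
Qed.

Lemma code_spectrum_le_dE s a : 0 < s -> 2 <= expR (a / s) ->
  code_spectrum s a <= 2 * d_E W c.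
Proof.
move=> s0 K2.
set T := \sum_(i < M) \sum_(j < M | i != j) code_dist i j.
have dET : d_E W c = (M * M.-1)%:R^-1 * T by [].
have T0 : 0 <= T.
  by apply: sumr_ge0 => i _; apply: sumr_ge0 => j _; case: (code_distE i j).
have sumT : \sum_(m < M) \sum_(j < M) code_dist m j = T.
  apply: eq_bigr => m _; rewrite (bigD1 m) //= code_dist_diag add0r.
  by apply: eq_bigl => j; rewrite eq_sym.
have le_T : code_spectrum s a <= 2 * (M%:R^-1 * M%:R^-1) * T.
  rewrite /code_spectrum -sumT mulr_sumr [X in _ <= X]mulr_sumr ler_sum // => m _.
  rewrite (_ : 2 * _ * _ = M%:R^-1 * (2 * (M%:R^-1 * \sum_(j < M) code_dist m j))).
    by rewrite ler_pM2l ?invr_gt0 // spec_msg_le_code_dist.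
  by ring.
apply: le_trans le_T _; rewrite dET -mulrA ler_pM2l //.
have [M1|M2] := leqP M 1.
  suff -> : T = 0 by rewrite !mulr0.
  apply: big1 => i _; apply: big1 => j /eqP ij; exfalso; apply: ij.
  by apply: val_inj => /=; have := ltn_ord i; have := ltn_ord j; lia.
apply: ler_wpM2r T0 _ _ _; rewrite -invfM -natrM lef_pV2 ?posrE ?ltr0n ?ler_nat; lia.
Qed.

Lemma code_spectrum_le_IE s a : 0 < s -> 0 < a ->
  ((a / s * code_spectrum s a - 1)%:E <= I_E W c)%E.
Proof.
move=> s0 a0.
have div_ge i : ((a / s * spec_msg s a i - 1)%:E
    <= divergence (out_dist W (wt_Q (w:=c) i)) (code_out W c))%E.
  have -> : out_dist W (wt_Q (w:=c) i) = WQ i by apply/funext => y; rewrite chcompE.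
  by rewrite code_outE; exact: divergence_ge_tail (WQ_channel i) Wp_dist _ _ s0 a0.
apply: (@le_trans _ _
    (\sum_(i < M) (M%:R^-1)%:E * (a / s * spec_msg s a i - 1)%:E)%E); last first.
  by apply: lee_sum => i _; rewrite lee_wpmul2l ?lee_fin ?invr_ge0.
under eq_bigr do rewrite -EFinM.
rewrite sumEFin lee_fin -mulr_sumr sumrB -mulr_sumr sumr_const card_ord.
by rewrite mulrBr mulVf ?lt0r_neq0 // mulrCA.
Qed.

End CodeSpectrum.

Lemma sum_disjoint_indicator_le (R : realType) (T : Type) (n : nat)
    (D : 'I_n -> set T) (x : R) (y : T) :
  (forall i j, i != j -> D i `&` D j = set0) -> 0 <= x ->
  \sum_(i < n) (if y \in D i then x else 0) <= x.
Proof.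
move=> disjD x0; have [[i yDi]|noD] := pselect (exists i, y \in D i).
  rewrite (bigD1 i) //= yDi big1 ?addr0 // => j ji; case: ifP => // yDj.
  have := disjD _ _ ji; rewrite -subset0 => /(_ y) yD0; exfalso.
  by apply: yD0; split; rewrite -inE.
by rewrite big1 // => j _; case: ifP => // yDj; exfalso; apply: noD; exists j.
Qed.

Section VerduHan.
Variables (R : realType) (X Y : countType) (c : wtcode R X Y) (W : X -> Y -> R).
Hypothesis hW : is_channel W.

Local Notation M := (wt_M c).
Local Notation D := (wt_D (w:=c)).
Local Notation WQ := (chcomp W (wt_Q (w:=c))).
Local Notation Wp := (out_dist WQ (unif R M)).

Let WQ_channel := code_channel_is_channel (c:=c) hW.
Let Wp_dist := code_mix_is_dist c hW.

Definition decode_err m := fine (\esum_(y in ~` D m) (WQ m y)%:E)%E.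

Definition mix_on_decoder m := fine (\esum_(y in D m) (Wp y)%:E)%E.

Let decode_errE m : (\esum_(y in ~` D m) (WQ m y)%:E)%E = (decode_err m)%:E.
Proof.
by apply: (esum_dominatedE _ _ (WQ_channel m).2).1 => y; rewrite lexx dist_ge0.
Qed.

Let mix_on_decoderE m : (\esum_(y in D m) (Wp y)%:E)%E = (mix_on_decoder m)%:E.
Proof. by apply: (esum_dominatedE _ _ Wp_dist.2).1 => y; rewrite lexx dist_ge0. Qed.

Lemma eps_BE : eps_B W c = M%:R^-1 * \sum_(m < M) decode_err m.
Proof.
congr (_ * _); apply: eq_bigr => m _; congr fine.
by apply: eq_esum => y _; rewrite chcompE.
Qed.

Lemma sum_mix_on_decoder_le1 : \sum_(m < M) mix_on_decoder m <= 1.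
Proof.
rewrite -lee_fin -sumEFin; under eq_bigr do rewrite -mix_on_decoderE esum_EFin_mkcond.
rewrite -esum_sum => [|y m _ _]; last by case: ifP; rewrite lee_fin ?dist_ge0.
rewrite -Wp_dist.2; apply: le_esum => y _; rewrite sumEFin lee_fin.
by rewrite sum_disjoint_indicator_le ?dist_ge0 // => i j; exact: wt_D_disj.
Qed.

(* Split [W_m] over the high-density set, the complement of [D m], and the
   rest of [D m], where [W_m <= expR (a / s) * W_p]. *)
Lemma msg_mass_split s a m : 0 < s ->
  1 <= spec_msg W s a m + decode_err m + expR (a / s) * mix_on_decoder m.
Proof.
move=> s0; set K := expR (a / s).
pose G y := if a < s * ln (WQ m y / Wp y) then WQ m y else 0.
pose E y := if y \in ~` D m then WQ m y else 0.
pose F y := if y \in D m then Wp y else 0.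
have G0 y : 0 <= G y by rewrite /G; case: ifP; rewrite ?dist_ge0.
have E0 y : 0 <= E y by rewrite /E; case: ifP; rewrite ?dist_ge0.
have F0 y : 0 <= F y by rewrite /F; case: ifP; rewrite ?dist_ge0.
have K0 : 0 <= K by exact: expR_ge0.
have pointwise y : ((WQ m y)%:E <= (G y + E y + K * F y)%:E)%E.
  rewrite lee_fin /G /E /F in_setC.
  have WQ0 := dist_ge0 (WQ_channel m) y; have KWp0 := mulr_ge0 K0 (dist_ge0 Wp_dist y).
  case: ifPn => [_|h]; case: (boolP (y \in D m)) => /= yD;
    rewrite ?mulr0 ?addr0 ?add0r ?lerDl //.
  have [->|WQ_neq0] := eqVneq (WQ m y) 0; first by [].
  have WQ_gt0 : 0 < WQ m y by rewrite lt0r WQ_neq0.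
  exact: le_expR_mul_of_ln_ratio s0 WQ_gt0 (code_mix_gt0 hW WQ_gt0) h.
have sumE : (\esum_(y in [set: Y]) (G y + E y + K * F y)%:E =
    (spec_msg W s a m + decode_err m + K * mix_on_decoder m)%:E)%E.
  under eq_esum do rewrite !EFinD EFinM.
  rewrite esumD => [|y _|y _]; last 2 first.
  - by rewrite adde_ge0 // lee_fin.
  - by rewrite mule_ge0 // lee_fin.
  rewrite esumD => [|y _|y _]; [|by rewrite lee_fin..].
  rewrite esumZl // /G /E /F (spec_msgE hW) -!esum_EFin_mkcond.
  by rewrite decode_errE mix_on_decoderE -EFinM -!EFinD.
have := le_esum (fun y (_ : [set: Y] y) => pointwise y).
by rewrite (WQ_channel m).2 sumE lee_fin.
Qed.

Lemma verdu_han s a : 0 < s ->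
  1 - eps_B W c - expR (a / s) / M%:R <= code_spectrum c W s a.
Proof.
move=> s0; set K := expR (a / s).
have M_gt0 : 0 < M%:R :> R by rewrite ltr0n wt_M_gt0.
have : M%:R^-1 * \sum_(m < M) 1 <= M%:R^-1 * \sum_(m < M)
    (spec_msg W s a m + decode_err m + K * mix_on_decoder m).
  by rewrite ler_pM2l ?invr_gt0 // ler_sum // => m _; exact: msg_mass_split.
rewrite sumr_const card_ord mulVf ?lt0r_neq0 // !big_split /= -mulr_sumr.
rewrite eps_BE /code_spectrum !mulrDr => avg.
have KF : M%:R^-1 * (K * \sum_(m < M) mix_on_decoder m) <= K / M%:R.
  by rewrite mulrCA ler_pM2l ?expR_gt0 // ler_piMr ?invr_ge0 ?sum_mix_on_decoder_le1.
lra.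
Qed.

End VerduHan.

Lemma cvg_invn (R : realType) : (fun n : nat => (n%:R : R)^-1) @ \oo --> 0.
Proof.
apply/gtr0_cvgV0; last exact: cvgr_idn.
by near=> n; rewrite ltr0n; near: n; exact: nbhs_infty_ge 1%N.
Unshelve. all: by end_near. Qed.

Lemma limn_einf_gt (R : realType) (u : (\bar R)^nat) (b : \bar R) :
  (b < limn_einf u)%E -> \forall n \near \oo, (b < u n)%E.
Proof.
rewrite limn_einf_lim (cvg_lim _ (@cvg_einfs_sup _ u)) //.
move=> /ereal_sup_gt[_ [m _ <-]] b_lt; exists m => // n /= mn.
by apply: lt_le_trans b_lt _; apply: ereal_inf_lbound; exists n.
Qed.

Lemma I_over0_le0 (R : realType) (X Y : nat -> countType) (p : forall n, X n -> R)
    (W : forall n, X n -> Y n -> R) :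
  (forall e : R, 0 < e -> spec_prob p W e @ \oo --> 0%E) -> (I_over 0 p W <= 0)%E.
Proof.
move=> spec0; apply/lee_addgt0Pr => e e0; rewrite add0e.
apply: ereal_inf_lbound; exists e => //=.
by rewrite eq_sym oner_eq0 (cvg_limn_einf_sup (spec0 e e0)).2.
Qed.

Section CodeSequence.
Local Unset Implicit Arguments.
Variables (R : realType) (X Y : nat -> countType) (c : forall n, wtcode R (X n) (Y n)).

Local Notation Q := (fun n => wt_Q (w:=c n)).
Local Notation p := (fun n => unif R (wt_M (c n))).

Lemma spec_prob_codeE (V : nat -> countType) (W : forall n, X n -> V n -> R) a :
  (forall n, is_channel (W n)) ->
  spec_prob p (fun n => chcomp (W n) (Q n)) a =
  (fun n => (code_spectrum (c n) (W n) n%:R^-1 a)%:E).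
Proof. by move=> hW; apply/funext => n; exact: (spectrum_codeE (c n) (hW n) n%:R^-1 a). Qed.

Lemma code_rate_gt b : (b%:E < code_rate c)%E ->
  \forall n \near \oo, expR (b * n%:R) <= (wt_M (c n))%:R.
Proof.
move=> /limn_einf_gt b_lt; near=> n.
have n_gt0 : (0 < n)%N by near: n; exact: nbhs_infty_ge 1%N.
have M_gt0 : 0 < (wt_M (c n))%:R :> R by rewrite ltr0n wt_M_gt0.
have : b < n%:R^-1 * ln (wt_M (c n))%:R by rewrite -lte_fin; near: n.
rewrite mulrC ltr_pdivlMr ?ltr0n // => lt_ln.
by rewrite -[X in _ <= X]lnK ?posrE // ler_expR ltW.
Unshelve. all: by end_near. Qed.

Variables (Z : nat -> countType).
Variables (WB : forall n, X n -> Y n -> R) (WE : forall n, X n -> Z n -> R).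
Hypotheses (hWB : forall n, is_channel (WB n)) (hWE : forall n, is_channel (WE n)).

Lemma code_rate_le_I_under : (fun n => eps_B (WB n) (c n)) @ \oo --> 0 ->
  (code_rate c <= I_under 1 p (fun n => chcomp (WB n) (Q n)))%E.
Proof.
move=> epsB0; apply: le_ereal_inf_tmp => _ [a /= spec_lt1 <-].
rewrite eqxx in spec_lt1; rewrite leNgt; apply/negP => a_lt_rate.
have [b [ab b_lt_rate]] : exists b : R, a < b /\ (b%:E < code_rate c)%E.
  move: a_lt_rate; case: (code_rate c) => [r| |] // a_lt_r.
    by exists ((a + r) / 2); move: a_lt_r; rewrite !lte_fin => a_lt_r; split; lra.
  by exists (a + 1); split; [lra|rewrite ltry].
suff : spec_prob p (fun n => chcomp (WB n) (Q n)) a @ \oo --> 1%E.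
  by move=> /cvg_limn_einf_sup[spec1 _]; move: spec_lt1; rewrite spec1 ltxx.
rewrite spec_prob_codeE //; apply: cvg_EFin; first exact: nearW.
apply: (@squeeze_cvgr _ _ _ _
  (fun n => 1 - eps_B (WB n) (c n) - expR (a - b) ^+ n) (fun=> 1)); last 2 first.
- rewrite -[X in _ --> X]subr0 -[X in _ --> X]subr0.
  apply: cvgB; first by apply: cvgB => //; exact: cvg_cst.
  by apply: cvg_expr; rewrite ger0_norm ?expR_ge0 // expR_lt1 subr_lt0.
- exact: cvg_cst.
near=> n.
have n_gt0 : 0 < n%:R :> R by rewrite ltr0n; near: n; exact: nbhs_infty_ge 1%N.
have M_gt0 : 0 < (wt_M (c n))%:R :> R by rewrite ltr0n wt_M_gt0.
rewrite (andP (code_spectrum_ge0_le1 (c n) (hWB n) _ _)).2 andbT.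
apply: le_trans (verdu_han (c n) (hWB n) a _); last by rewrite invr_gt0.
rewrite invrK lerB // -expRM_natr mulrBl expRB ler_pM2l ?expR_gt0 //.
rewrite lef_pV2 ?posrE ?expR_gt0 //; near: n; exact: code_rate_gt.
Unshelve. all: by end_near. Qed.

Lemma spec_prob_cvg0_of_dE : (fun n => d_E (WE n) (c n)) @ \oo --> 0 ->
  forall e, 0 < e -> spec_prob p (fun n => chcomp (WE n) (Q n)) e @ \oo --> 0%E.
Proof.
move=> dE0 e e0; rewrite spec_prob_codeE //; apply: cvg_EFin; first exact: nearW.
apply: (@squeeze_cvgr _ _ _ _ (fun=> 0) (fun n => 2 * d_E (WE n) (c n))); last 2 first.
- exact: cvg_cst.
- by rewrite -(mulr0 2); apply: cvgM => //; exact: cvg_cst.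
near=> n.
have n_gt0 : 0 < n%:R :> R by rewrite ltr0n; near: n; exact: nbhs_infty_ge 1%N.
rewrite (andP (code_spectrum_ge0_le1 (c n) (hWE n) _ _)).1 /=.
apply: (code_spectrum_le_dE (c n) (hWE n)); first by rewrite invr_gt0.
have en_ge1 : 1 <= e * n%:R.
  rewrite -[X in X <= _](mulfV (lt0r_neq0 e0)) ler_pM2l //.
  by near: n; exact: nbhs_infty_ger.
by rewrite invrK (le_trans _ (expR_ge1Dx _)) //; lra.
Unshelve. all: by end_near. Qed.

Lemma spec_prob_cvg0_of_IE :
  (fun n => (I_E (WE n) (c n) * (n%:R^-1)%:E)%E) @ \oo --> 0%E ->
  forall e, 0 < e -> spec_prob p (fun n => chcomp (WE n) (Q n)) e @ \oo --> 0%E.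
Proof.
move=> IE0 e e0; rewrite spec_prob_codeE //; apply: cvg_EFin; first exact: nearW.
have [IE_near_fin IE0_fine] := (fine_cvgP _ _).1 IE0.
apply: (@squeeze_cvgr _ _ _ _ (fun=> 0)
  (fun n => e^-1 * (fine (I_E (WE n) (c n) * (n%:R^-1)%:E) + n%:R^-1))); last 2 first.
- exact: cvg_cst.
- rewrite -(mulr0 e^-1) -[X in _ * X](addr0 0).
  by apply: cvgM; [exact: cvg_cst | apply: cvgD => //; exact: cvg_invn].
near=> n.
have n_gt0 : 0 < n%:R :> R by rewrite ltr0n; near: n; exact: nbhs_infty_ge 1%N.
rewrite (andP (code_spectrum_ge0_le1 (c n) (hWE n) _ _)).1 /=.
set sp := code_spectrum (c n) (WE n) n%:R^-1 e.
have IE_ge : ((e * n%:R * sp - 1)%:E <= I_E (WE n) (c n))%E.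
  by rewrite -[X in e * X]invrK code_spectrum_le_IE ?invr_gt0.
have IE_fin : (I_E (WE n) (c n) * (n%:R^-1)%:E)%E \is a fin_num by near: n.
have le_F : e * sp - n%:R^-1 <= fine (I_E (WE n) (c n) * (n%:R^-1)%:E).
  rewrite -lee_fin (fineK IE_fin).
  rewrite (_ : e * sp - n%:R^-1 = (e * n%:R * sp - 1) * n%:R^-1); last first.
    by field; rewrite gt_eqF.
  by rewrite EFinM lee_wpmul2r // lee_fin invr_ge0.
by rewrite -(ler_pM2l e0) mulVKf ?gt_eqF //; lra.
Unshelve. all: by end_near. Qed.

Lemma code_rate_le_secrecy_bound : (fun n => eps_B (WB n) (c n)) @ \oo --> 0 ->
  (forall e, 0 < e -> spec_prob p (fun n => chcomp (WE n) (Q n)) e @ \oo --> 0%E) ->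
  (code_rate c <= secrecy_bound WB WE)%E.
Proof.
move=> epsB0 specE0.
apply: (@le_trans _ _ (I_under 1 p (fun n => chcomp (WB n) (Q n))
                       - I_over 0 p (fun n => chcomp (WE n) (Q n)))%E).
  by rewrite -[code_rate c]sube0 leeB ?code_rate_le_I_under ?I_over0_le0.
apply: ereal_sup_ubound; exists (fun n => 'I_(wt_M (c n)) : countType), Q, p.
split=> [n|]; first exact: (@wt_Q_dist _ _ _ (c n)).
by split=> // n; exact: unif_is_dist (wt_M_gt0 (c n)).
Qed.

End CodeSequence.

Theorem lemma6 (R : realType) (X Y Z : nat -> countType)
  (WB : forall n, X n -> Y n -> R) (WE : forall n, X n -> Z n -> R)
  (hWB : forall n, is_channel (WB n)) (hWE : forall n, is_channel (WE n)) :
  (C_d WB WE <= secrecy_bound WB WE)%E /\ (C_I WB WE <= secrecy_bound WB WE)%E.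
Proof.
split; apply: ge_ereal_sup => _ [c [epsB0 [leak0 ->]]];
  apply: code_rate_le_secrecy_bound => //.
- exact: spec_prob_cvg0_of_dE.
- exact: spec_prob_cvg0_of_IE.
Qed.
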